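(* In the standing construction, let $\lambda_2=2/n$. Every weakly reduced diagram over $\langle\mathfrak A\mid\mathcal R\rangle$, equipped with its special selection, satisfies the condition $\mathcal B(\lambda_1,\lambda_2)$.
   Context: Standing construction: Fix an integer $n\ge 63$ and a real number $\lambda_1$ with $0<\lambda_1<1$ and $\bigl(4+\frac{2n\lambda_1}{1-\lambda_1}\bigr)\lambda_1\le\frac1n$. Let $\mathfrak A=\{x_1,\dots,x_n\}$. A group word over $\mathfrak A$ (a word in the letters $x_i^{\pm1}$) is called regular if it has the form $x_1^{k_1}x_2^{k_2}\cdots x_n^{k_n}$ with $k_i\in\mathbb Z$; $|w|$ denotes word length. Fix a total order on the set of reduced group words over $\mathfrak A$ which is order-isomorphic to $\mathbb N$. Define sets $\mathcal R_0\subseteq\mathcal R_1\subseteq\cdots$ inductively: $\mathcal R_0=\emptyset$; for $i>0$, if every group word over $\mathfrak A$ is equal to some regular word in the group $\langle\mathfrak A\mid\mathcal R_{i-1}\rangle$, put $\mathcal R_i=\mathcal R_{i-1}$ (and $w_i,m_i,r_i$ are undefined); otherwise let $w_i$ be the least (in the fixed order) reduced group word that does not start with $x_1^{\pm1}$, does not end with $x_n^{\pm1}$, and is not equal in $\langle\mathfrak A\mid\mathcal R_{i-1}\rangle$ to any regular word; choose a positive integer $m_i$ such that (a) $m_i\ne m_j$ for every $j<i$ for which $m_j$ is defined, (b) $nm_i+|w_i|\ge nm_j+|w_j|$ for every such $j<i$, (c) $\lambda_1(nm_i+|w_i|)\ge|w_i|$; set $r_i=x_1^{m_i}x_2^{m_i}\cdots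 x_n^{m_i}w_i^{-1}$ and $\mathcal R_i=\mathcal R_{i-1}\cup\{r_i\}$. Let $\mathcal R=\bigcup_{i\ge0}\mathcal R_i$, let $G=\langle\mathfrak A\mid\mathcal R\rangle$, and let $a_i\in G$ be the image of $x_i$. The statement is asserted for every choice of the order and of the $m_i$ satisfying (a)–(c). Diagrams: a map is a connected subcomplex of an oriented combinatorial 2-sphere together with a set of cycles (its contours) such that each oriented edge lies in the boundary cycle of a face or in a contour; a diagram over $\langle\mathfrak A\mid\mathcal R\rangle$ is a map whose oriented edges are labelled by letters of $\mathfrak A^{\pm1}$ (mutually inverse oriented edges get inverse labels) so that the contour $\partial\Pi$ of each face $\Pi$ (oriented counterclockwise) has a representative cyclic path labelled by an element of $\mathcal R^{\pm1}$; $|\partial\Pi|$ is its length. A pair of distinct faces $\{\Pi_1,\Pi_2\}$ is immediately cancellable if there are paths $p_1,p_2$ with a nontrivial common initial subpath, $\langle p_1\rangle=\partial\Pi_1$, $\langle p_2^{-1}\rangle=\partial\Pi_2$ and equal labels; a diagram is weakly reduced if it has no such pair. A selection on a diagram is a set of nontrivial reduced subpaths of contours of faces closed under taking nontrivial subpaths; paths in it are selected; a path $p$ is double-selected if $p$ and $p^{-1}$ are both selected. The special selection: for each face $\Pi$, write $\partial\Pi=\langle st\rangle$ where $\ell(s)=x_1^{m}x_2^{m}\cdots x_n^{m}$ or $x_n^{-m}\cdots x_1^{-m}$ for some $m\in\mathbb N$ and $|s|>\frac{n}{2n-2}|\partial\Pi|$ (this $s$ is the part of $r_j^{\pm1}$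 corresponding to $x_1^{m_j}\cdots x_n^{m_j}$); the selected subpaths of $\partial\Pi$ are exactly the nontrivial subpaths of $s$. An oriented arc is a simple path all of whose intermediate vertices have degree $2$; an arc is a pair of mutually inverse oriented arcs; an arc is double-selected if both its oriented arcs are selected, and is incident to $\Pi$ if one of its oriented arcs is a subpath of $\partial\Pi$. For $\lambda_1,\lambda_2\in[0,1]$, a diagram with selection satisfies $\mathcal B(\lambda_1,\lambda_2)$ if for each face $\Pi$: ($\mathcal B_0$) $\partial\Pi$ has at least one selected subpath and at most one maximal selected subpath; ($\mathcal B_1$) some selected subpath of $\partial\Pi$ has length $\ge(1-\lambda_1)|\partial\Pi|$; ($\mathcal B_2$) every double-selected arc incident to $\Pi$ has length $\le\lambda_2|\partial\Pi|$. *)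

From HB Require Import structures.
From mathcomp Require Import all_boot all_order all_algebra.
From mathcomp Require Import reals.
From Stdlib Require Import Relations.
Unset Printing Implicit Defensive.
Import Order.TTheory GRing.Theory Num.Theory.
Local Open Scope ring_scope.

(* The letter (i, false) is x_{i+1}, the letter (i, true) is x_{i+1}^-1 *)
Definition letter (n : nat) := ('I_n * bool)%type.
Definition word (n : nat) := seq (letter n).

Definition linv {n} (x : letter n) : letter n := (x.1, ~~ x.2).
Definition winv {n} (w : word n) : word n := rev (map linv w).

Definition reduced_word {n} (w : word n) : bool :=
  all (fun p => p.2 != linv p.1) (zip w (behead w)).

(* regular word x_1^{k_1} ... x_n^{k_n}, k_i in Z (|k_i| = k i, sign = s i) *)
Definition regular {n} (w : word n) : Prop :=
  exists (k : 'I_n -> nat) (s : 'I_n -> bool),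
    w = flatten [seq nseq (k i) (i, s i) | i <- enum 'I_n].

Definition block (n m : nat) : word n :=
  flatten [seq nseq m (i, false) | i <- enum 'I_n].

Definition relator {n} (m : nat) (w : word n) : word n := block n m ++ winv w.

(* Equality in the group <A | Rel>: the congruence on words generated by
   inserting/deleting r^{+-1} (r in Rel) or a trivial relator x x^-1. *)
Definition gstep {n} (Rel : word n -> Prop) (u v : word n) : Prop :=
  exists a b r, (Rel r \/ Rel (winv r) \/ exists x, r = [:: x; linv x]) /\
                u = a ++ b /\ v = a ++ r ++ b.
Definition geq {n} (Rel : word n -> Prop) : relation (word n) :=
  clos_refl_sym_trans (word n) (gstep Rel).
Definition eq_regular {n} (Rel : word n -> Prop) (u : word n) : Prop :=
  exists v, regular v /\ geq Rel u v.

(* the fixed total order on reduced words order-isomorphic to N, given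
   by its order isomorphism e : N -> reduced words (u < v iff index < index) *)
Definition word_order_enum {n} (e : nat -> word n) : Prop :=
  injective e /\ (forall k, reduced_word (e k)) /\
  (forall w, reduced_word w -> exists k, e k = w).

(* C i = Some (w_i, m_i) when w_i, m_i, r_i are defined, None otherwise *)
Definition Rprefix {n} (C : nat -> option (word n * nat)) (i : nat) (r : word n) : Prop :=
  exists j w m, (j < i)%N /\ C j = Some (w, m) /\ r = relator m w.
Definition Rall {n} (C : nat -> option (word n * nat)) (r : word n) : Prop :=
  exists j w m, C j = Some (w, m) /\ r = relator m w.

Definition not_start_x1 {n} (w : word n) : bool :=
  if w is x :: _ then (nat_of_ord x.1 != 0)%N else true.
Definition not_end_xn {n} (w : word n) : bool :=
  if rev w is x :: _ then (nat_of_ord x.1 != n.-1)%N else true.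

Definition candidate {n} (Rel : word n -> Prop) (w : word n) : Prop :=
  not_start_x1 w /\ not_end_xn w /\ ~ eq_regular Rel w.

Definition construction {R : realType} {n : nat} (lam1 : R)
    (e : nat -> word n) (C : nat -> option (word n * nat)) : Prop :=
  C 0%N = None /\
  forall i, (0 < i)%N ->
    ((forall u : word n, eq_regular (Rprefix C i) u) -> C i = None) /\
    (~ (forall u : word n, eq_regular (Rprefix C i) u) ->
      exists w m, C i = Some (w, m) /\
        (exists k, e k = w /\ candidate (Rprefix C i) w /\
           forall k', (k' < k)%N -> ~ candidate (Rprefix C i) (e k')) /\
        (0 < m)%N /\
        (forall j w' m', (j < i)%N -> C j = Some (w', m') ->
            m != m' /\ (n * m' + size w' <= n * m + size w)%N) /\
        (size w)%:R <= lam1 * (n * m + size w)%N%:R).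

(* darts = oriented edges; drev = inverse oriented edge; dnext d = the *)
(* oriented edge following d on the boundary cycle (face contour, read *)
(* counterclockwise, or map contour) containing d; dface marks darts   *)
(* lying on boundaries of faces (the other dnext-cycles are contours). *)
Record dmap (n : nat) := DMap {
  dart : finType;
  drev : dart -> dart;
  dnext : dart -> dart;
  dface : pred dart;
  dlab : dart -> letter n }.
Arguments dart {n} d.
Arguments drev {n} d _.
Arguments dnext {n} d _.
Arguments dface {n} d _.
Arguments dlab {n} d _.

(* permutation of the darts with a common tail vertex *)
Definition dsigma {n} (M : dmap n) (d : dart M) : dart M := dnext M (drev M d).

(* vertices are dsigma-orbits; tail of d = orbit of d, head of d = tail of drev d *)
Definition is_map {n} (M : dmap n) : Prop :=
  involutive (drev M) /\ (forall d, drev M d != d) /\ injective (dnext M) /\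
  (forall d, dface M (dnext M d) = dface M d) /\
  (forall d e, connect [rel x y | (y == drev M x) || (y == dnext M x)] d e) /\
  (* genus 0 (a subcomplex of the 2-sphere): V - E + (#faces + #contours) = 2 *)
  (2 * fcard (dsigma M) predT + 2 * fcard (dnext M) predT = #|dart M| + 4)%N.

Definition blen {n} (M : dmap n) (d : dart M) : nat := fingraph.order (dnext M) d.

Definition bword {n} (M : dmap n) (d : dart M) : word n :=
  map (dlab M) (traject (dnext M) d (blen M d)).

Definition is_diagram {n} (Rel : word n -> Prop) (M : dmap n) : Prop :=
  is_map M /\
  (forall d, dlab M (drev M d) = linv (dlab M d)) /\
  (forall d, dface M d ->
     exists r j, (Rel r \/ Rel (winv r)) /\ rot j (bword M d) = r).

(* Weakly reduced: no immediately cancellable pair of faces.  The pair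
   {Pi1, Pi2} (Pi1 through d, Pi2 through drev d) is immediately cancellable
   iff p1 = (d, dnext d, ...) once around dPi1 and p2 = (d, psi d, psi^2 d, ...)
   with p2^-1 once around dPi2 have equal labels, psi = drev o dnext^-1 o drev. *)
Definition weakly_reduced {n} (M : dmap n) : Prop :=
  ~ exists d : dart M,
      [/\ dface M d, dface M (drev M d), ~~ fconnect (dnext M) d (drev M d),
          blen M d = blen M (drev M d) &
          forall j, (j < blen M d)%N ->
            dlab M (iter j (dnext M) d) =
            dlab M (iter j (fun x => drev M (finv (dnext M) (drev M x))) d)].

Definition is_dpath {n} (M : dmap n) (p : seq (dart M)) : bool :=
  if p is x :: p' then path [rel a b | fconnect (dsigma M) (drev M a) b] x p'
  else true.

Definition pinv {n} (M : dmap n) (p : seq (dart M)) : seq (dart M) :=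
  rev (map (drev M) p).

(* oriented arc: nontrivial simple path (no vertex visited twice) all of
   whose intermediate vertices have degree 2 *)
Definition oriented_arc {n} (M : dmap n) (p : seq (dart M)) : bool :=
  if p is x :: p' then
    [&& is_dpath M p,
        pairwise (fun a b => ~~ fconnect (dsigma M) a b)
                 (rcons p (drev M (last x p'))) &
        all (fun d => fingraph.order (dsigma M) d == 2)%N p']
  else false.

(* nontrivial subpath of the contour of the face/contour through d *)
Definition bsub {n} (M : dmap n) (d : dart M) (p : seq (dart M)) : Prop :=
  exists e l, fconnect (dnext M) d e /\ (0 < l <= blen M d)%N /\
              p = traject (dnext M) e l.

(* the special selection: d starts a subpath s of the face contour of length k
   with label x_1^m..x_n^m or x_n^-m..x_1^-m and |s| > n/(2n-2) |dPi| *)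
Definition special_block {n} (M : dmap n) (d : dart M) (k : nat) : Prop :=
  (k <= blen M d)%N /\ ((2 * n - 2) * k > n * blen M d)%N /\
  exists m, map (dlab M) (traject (dnext M) d k) = block n m \/
            map (dlab M) (traject (dnext M) d k) = winv (block n m).

Definition selected {n} (M : dmap n) (p : seq (dart M)) : Prop :=
  exists d k a l, dface M d /\ special_block M d k /\ (0 < l)%N /\
                  (a + l <= k)%N /\ p = traject (dnext M) (iter a (dnext M) d) l.

Definition max_selected {n} (M : dmap n) (d : dart M) (p : seq (dart M)) : Prop :=
  selected M p /\ bsub M d p /\
  forall q, selected M q -> bsub M d q -> infix p q -> p = q.

Definition condB {R : realType} {n} (M : dmap n) (lam1 lam2 : R) : Prop :=
  forall d, dface M d ->
    ((exists p, selected M p /\ bsub M d p) /\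
     (forall p q, max_selected M d p -> max_selected M d q -> p = q)) /\
    (exists p, selected M p /\ bsub M d p /\
               (1 - lam1) * (blen M d)%:R <= (size p)%:R) /\
    (forall p, oriented_arc M p -> selected M p -> selected M (pinv M p) ->
       (bsub M d p \/ bsub M d (pinv M p)) ->
       (size p)%:R <= lam2 * (blen M d)%:R).

From HB Require Import structures.
From mathcomp Require Import all_boot all_order all_algebra.
From mathcomp Require Import reals.
From mathcomp Require Import zify lra.
Import Order.TTheory GRing.Theory Num.Theory.
Set Implicit Arguments. Unset Strict Implicit. Unset Printing Implicit Defensive.

(* Every face boundary is a cyclic conjugate of a relator
   [x_1^m ... x_n^m w^-1] or of its inverse, and the choice of [lam1] makes
   [4 n |w| <= |r|].  A special block is longer than [n/(2n-2)] of the boundary,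
   so its exponent exceeds [|w|]; a run of one letter that long inside the
   periodic boundary word can only be a full sub-block [x_i^m] of the relator.
   Hence the special block of a face is exactly its relator's block, which
   gives B0, and B1 since [|w| <= lam1 |r|].  For B2, a double-selected path
   longer than two sub-blocks forces the blocks on its two sides to be mirror
   images with the same exponent; the exponents [m_i] being distinct, both
   faces then carry the same relator with opposite orientations, glued letter
   by letter, i.e. they form an immediately cancellable pair.  So such a path
   has length at most [2m <= 2/n |r|]. *)

Lemma linvK n : involutive (@linv n).
Proof. by case=> a b; rewrite /linv /= negbK. Qed.

Lemma winvK n : involutive (@winv n).
Proof.
by move=> w; rewrite /winv map_rev revK -map_comp map_id_in // => x _; apply: linvK.
Qed.

Lemma winv_cat n (u v : word n) : winv (u ++ v) = winv v ++ winv u.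
Proof. by rewrite /winv map_cat rev_cat. Qed.

Lemma size_winv n (w : word n) : size (winv w) = size w.
Proof. by rewrite /winv size_rev size_map. Qed.

Lemma nth_flatten_nseq (T I : Type) (x0 : T) (i0 : I) (g : I -> T) m (s : seq I) y :
  y < m * size s ->
  nth x0 (flatten [seq nseq m (g i) | i <- s]) y = g (nth i0 s (y %/ m)).
Proof.
elim: s y => [|a s IH] y /=; first by rewrite muln0.
rewrite mulnS => Hy; rewrite nth_cat size_nseq.
case: ltnP => Hym; first by rewrite nth_nseq Hym divn_small.
have m_gt0 : 0 < m by case: (posnP m) Hy => [->|//]; rewrite mul0n.
rewrite IH; last by rewrite -(ltn_add2l m) subnKC.
by rewrite -{2}(subnKC Hym) -[X in (X + _) %/ _]mul1n divnMDl.
Qed.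

Lemma size_block n m : size (block n m) = n * m.
Proof.
rewrite /block size_flatten /shape -map_comp.
rewrite (eq_map (_ : size \o _ =1 fun=> m)) => [|i]; last exact: size_nseq.
rewrite -[n in RHS](size_enum_ord n) mulnC.
by elim: (enum 'I_n) => [|i s IH] /=; rewrite ?muln0 ?mulnS ?IH.
Qed.

Lemma nth_block n m (x0 : letter n) y : y < n * m ->
  (nth x0 (block n m) y).1 = y %/ m :> nat /\ (nth x0 (block n m) y).2 = false.
Proof.
move=> Hy; have n_gt0 : 0 < n by case: n x0 Hy => // [[[]]].
rewrite /block (nth_flatten_nseq x0 (Ordinal n_gt0) (fun i : 'I_n => (i, false))) /=.
  have m_gt0 : 0 < m by case: m Hy; rewrite ?muln0.
  by split => //; rewrite nth_enum_ord // ltn_divLR // mulnC.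
by rewrite size_enum_ord mulnC.
Qed.

Lemma divn_rev n m y : y < n * m -> (n * m - y.+1) %/ m = n.-1 - y %/ m.
Proof.
move=> Hy; have m_gt0 : 0 < m by case: (posnP m) Hy => [->|//]; rewrite muln0.
have Hq : y %/ m < n by rewrite ltn_divLR.
have Hr := ltn_pmod y m_gt0.
case: n Hy Hq => // k Hy Hq /=.
have -> : k.+1 * m - y.+1 = (k - y %/ m) * m + (m - (y %% m).+1).
  rewrite {1}(divn_eq y m) mulnBl mulSn.
  have : y %/ m * m <= k * m by rewrite leq_mul2r; apply/orP; right; lia.
  move: Hr; set q := y %/ m; set r := y %% m; set a := k * m; set b := q * m; lia.
have Hs : m - (y %% m).+1 < m by move: m_gt0; set r := y %% m; lia.
by rewrite divnMDl // (divn_small Hs) addn0.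
Qed.

Lemma nth_winv_block n m (x0 : letter n) y : y < n * m ->
  (nth x0 (winv (block n m)) y).1 = n.-1 - y %/ m :> nat /\
  (nth x0 (winv (block n m)) y).2 = true.
Proof.
move=> Hy; rewrite /winv nth_rev size_map size_block //.
have Hy' : n * m - y.+1 < n * m by move: Hy; set a := n * m; lia.
rewrite (nth_map x0) ?size_block //.
have [H1 H2] := nth_block x0 Hy'.
by rewrite /linv /= H2 H1 divn_rev.
Qed.

Lemma nth_rot_mod T (x0 : T) (s : seq T) k i : k <= size s -> i < size s ->
  nth x0 (rot k s) i = nth x0 s ((i + k) %% size s).
Proof.
move=> Hk Hi; rewrite /rot nth_cat size_drop; case: ltnP => H.
  have E : i + k < size s by move: H Hk Hi; set S := size s; lia.
  by rewrite nth_drop (modn_small E) addnC.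
have -> : i + k = (i - (size s - k)) + size s by move: H Hk Hi; set S := size s; lia.
rewrite nth_take ?modnDr ?modn_small //; move: H Hk Hi; set S := size s; lia.
Qed.

Lemma modn_lt2 x N : x < N + N -> x %% N = if x < N then x else x - N.
Proof.
move=> H; case: ltnP => H2; first by rewrite modn_small.
by rewrite -{1}(subnK H2) modnDr modn_small //; lia.
Qed.

Lemma modn_pred x N q : x.+1 %% N = q.+1 -> x %% N = q.
Proof. by rewrite modnS; case: ifP => // _ [->]. Qed.

Lemma modn_succ x N q : x %% N = q -> q.+1 < N -> x.+1 %% N = q.+1.
Proof. by move=> H Hq; rewrite -addn1 -modnDml H addn1 modn_small. Qed.

(* [X] and [Y] are mirror positions, [winv s] reading [s] backwards. *)
Lemma nth_rot_winv n (x0 : letter n) (s : word n) K X Y :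
  K <= size s -> Y < size s + size s -> X + K + Y + 1 = size s + size s ->
  nth x0 (rot K (winv s)) (X %% size s) = linv (nth x0 s (Y %% size s)).
Proof.
move=> HK HY HXY; set N := size s in HK HY HXY *.
have N_gt0 : 0 < N by lia.
rewrite nth_rot_mod ?size_winv ?ltn_pmod // modnDml.
have -> : (X + K) %% N = N - (Y %% N).+1.
  rewrite (modn_lt2 HY) modn_lt2; last by lia.
  by case: ifP; case: ifP; lia.
have Hy : Y %% N < N by rewrite ltn_pmod.
rewrite /winv nth_rev size_map -/N; last by lia.
by rewrite (nth_map x0) -/N; [congr (linv (nth _ _ _)) | ]; lia.
Qed.

(* The first two jumps of the left-hand staircase, one sub-block apart, are
   jumps of the right-hand one. *)
Lemma divn_window_inj m1 m2 A1 A2 l : 0 < m1 -> 0 < m2 -> 2 * m1 < l ->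
  (forall u, u < l -> (A1 + u) %/ m1 = (A2 + u) %/ m2) -> m1 = m2 /\ A1 = A2.
Proof.
move=> m1_gt0 m2_gt0 Hl H.
have D : forall u j, u < l -> j * m1 <= A1 + u < j * m1 + m1 ->
    j * m2 <= A2 + u < j * m2 + m2.
  move=> u j Hu Hr.
  have : (A1 + u) %/ m1 == j.
    by case/andP: Hr => ? ?; rewrite eqn_leq leq_divRL // -ltnS ltn_divLR // mulSnr; apply/andP.
  by rewrite H //; move/eqP=> <-; rewrite leq_divM -mulSnr ltn_ceil.
have /andP[HA1 HA2] : A1 %/ m1 * m1 <= A1 < A1 %/ m1 * m1 + m1.
  by rewrite leq_divM -mulSnr ltn_ceil.
move: D HA1 HA2; set k := A1 %/ m1 => D HA1 HA2.
set u0 := k * m1 + m1 - A1.+1.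
have D0 := D u0 k; have D1 := D u0.+1 k.+1.
have D2 := D (u0 + m1) k.+1; have D3 := D (u0 + m1).+1 k.+2.
move: D0 D1 D2 D3; rewrite /u0 !mulSnr; set km1 := k * m1; set km2 := k * m2.
move=> D0 D1 D2 D3.
have /andP[E0 E0'] := D0 ltac:(lia) ltac:(lia).
have /andP[E1 E1'] := D1 ltac:(lia) ltac:(lia).
have /andP[E2 E2'] := D2 ltac:(lia) ltac:(lia).
have /andP[E3 E3'] := D3 ltac:(lia) ltac:(lia).
have Em : m1 = m2 by lia.
rewrite /km2 -Em -/km1 in E0 E0' E1 E1'.
split => //; lia.
Qed.

Section PeriodicBlock.
Variables (n m K : nat) (c : nat -> letter n).
Hypothesis m_gt0 : 0 < m.
Hypothesis n_gt0 : 0 < n.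
Let N := n * m + K.
Hypothesis c_periodic : forall u, c (u + N) = c u.
Hypothesis c_block : forall u, u < n * m -> (c u).1 = u %/ m :> nat /\ (c u).2 = false.

Let nm_gt0 : 0 < n * m. Proof. by rewrite muln_gt0 m_gt0 n_gt0. Qed.

Lemma c_mod u : c u = c (u %% N).
Proof.
rewrite {1}(divn_eq u N); elim: (u %/ N) => [|q IH]; first by rewrite mul0n add0n.
by rewrite mulSn -addnA addnC c_periodic.
Qed.

Lemma window_hits_block t a : K < a -> exists2 v, v < a & (t + v) %% N < n * m.
Proof.
move=> Ha; case: (ltnP (t %% N) (n * m)) => Hz; first by exists 0; [lia | rewrite addn0].
have HN : t %% N < N by rewrite ltn_pmod // /N; lia.
exists (N - t %% N); first by move: Hz HN; rewrite /N; set z := t %% N; lia.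
have -> : t + (N - t %% N) = (t %/ N).+1 * N.
  by rewrite {1}(divn_eq t N) mulSn -addnA subnKC 1?addnC // ltnW.
by rewrite modnMl.
Qed.

Lemma no_long_negative_run t a : K < a -> ~ (forall v, v < a -> (c (t + v)).2 = true).
Proof.
move=> Ha Hv; have [v Hva Hp] := window_hits_block t Ha.
by move: (Hv v Hva); rewrite c_mod; have [_ ->] := c_block Hp.
Qed.

Lemma index_mod u i : u %% N < n * m ->
  ((c u).1 == i :> nat) = (i * m <= u %% N < i * m + m).
Proof.
move=> Hu; rewrite c_mod; have [-> _] := c_block Hu.
by rewrite eqn_leq leq_divRL // -ltnS ltn_divLR // mulSnr andbC.
Qed.

Lemma run_forward s a i : (forall v, v < a -> (c (s + v)).1 = i :> nat) ->
  i.+1 < n -> i * m <= s %% N < i * m + m ->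
  forall d, d < a -> (s + d) %% N = s %% N + d /\ s %% N + d < i * m + m.
Proof.
move=> run iN /andP[Hlo Hhi].
have Hnm : i * m + m < n * m by rewrite -mulSnr ltn_mul2r m_gt0.
elim=> [|d IH] Hd; first by rewrite !addn0.
have [IH1 IH2] := IH (ltnW Hd).
have E : (s + d.+1) %% N = s %% N + d.+1.
  rewrite addnS (modn_succ IH1) ?addnS // /N.
  by move: IH2 Hnm; set q := s %% N; set nm := n * m; set im := i * m; lia.
split => //; have := run _ Hd; move/eqP; rewrite index_mod E; first by case/andP.
by move: IH2 Hnm; set q := s %% N; set nm := n * m; set im := i * m; lia.
Qed.

Lemma run_backward s a i : (forall v, v <= a -> (c (s + v)).1 = i :> nat) ->
  0 < i -> i < n -> i * m <= (s + a) %% N < i * m + m ->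
  forall d, d <= a -> (s + (a - d)) %% N = (s + a) %% N - d /\ i * m <= (s + a) %% N - d.
Proof.
move=> run i_gt0 iN /andP[Hlo Hhi].
have Hnm : i * m + m <= n * m by rewrite -mulSnr leq_mul2r iN orbT.
have im_ge : m <= i * m by rewrite leq_pmull.
elim=> [|d IH] Hd; first by rewrite !subn0.
have [IH1 IH2] := IH (ltnW Hd).
have E : (s + (a - d.+1)) %% N = (s + a) %% N - d.+1.
  apply: modn_pred; rewrite -addnS subnSK // IH1.
  by move: IH2 im_ge m_gt0; set q := (s + a) %% N; set im := i * m; lia.
have := run (a - d.+1) (leq_subr _ _); move/eqP; rewrite index_mod E.
- by case/andP => //; move: Hhi; set q := (s + a) %% N; set im := i * m; lia.
- exact: leq_ltn_trans (leq_subr _ _) (leq_trans Hhi Hnm).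
Qed.

Lemma long_run_is_subblock t a i : 0 < i -> i.+1 < n -> K < a ->
  (c t).1 != i :> nat -> (c (t.+1 + a)).1 != i :> nat ->
  (forall v, v < a -> (c (t.+1 + v)).1 = i :> nat) ->
  a = m /\ t.+1 %% N = i * m.
Proof.
move=> i_gt0 iN Ha Ht Hend run.
have [v0 Hv0 Hq0] := window_hits_block t.+1 Ha.
have Hnm : i * m + m < n * m by rewrite -mulSnr ltn_mul2r m_gt0.
have im_ge : m <= i * m by rewrite leq_pmull.
have Hin : i * m <= (t.+1 + v0) %% N < i * m + m by rewrite -index_mod // run.
have out u : (c u).1 != i :> nat -> u %% N < n * m -> ~~ (i * m <= u %% N < i * m + m).
  by move=> Hu Hlt; rewrite -index_mod.
have {Hend}Hend := out _ Hend; have {Ht}Ht := out _ Ht.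
have Hlast : (a - v0).-1 < a - v0 by clear -Hv0; lia.
have run_fw v : v < a - v0 -> (c (t.+1 + v0 + v)).1 = i :> nat.
  by move=> Hv; rewrite -addnA run //; clear -Hv; lia.
have [F1 F2] := run_forward run_fw iN Hin Hlast.
have run_bw v : v <= v0 -> (c (t.+1 + v)).1 = i :> nat.
  by move=> Hv; apply: run; clear -Hv Hv0; lia.
have [B1 B2] := run_backward run_bw i_gt0 (ltnW iN) Hin (leqnn v0).
rewrite subnn addn0 in B1.
have Et : t.+1 + a = (t.+1 + v0 + (a - v0).-1).+1 by clear -Hv0; lia.
move: Hend Ht B1 B2 F1 F2 Hin Hv0 Hnm im_ge; rewrite Et.
set q0 := (t.+1 + v0) %% N; set im := i * m; set nm := n * m.
have HN : nm <= N by rewrite /N leq_addr.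
clearbody q0 im nm.
move=> Hend Ht B1 B2 F1 F2 Hin Hv0 Hnm im_ge.
have E1 : (t.+1 + v0 + (a - v0).-1).+1 %% N = (q0 + (a - v0).-1).+1.
  by apply: modn_succ F1 _; clear -F2 Hnm HN; lia.
have E2 : t %% N = (q0 - v0).-1.
  by apply: modn_pred; rewrite B1; clear -B2 im_ge m_gt0; lia.
rewrite E1 in Hend; rewrite E2 in Ht.
move: (Hend ltac:(clear -F2 Hnm; lia)) (Ht ltac:(clear -Hin Hnm; lia)) => {Hend Ht}.
rewrite B1; clear -F2 B2 Hin Hv0 im_ge m_gt0; lia.
Qed.

Lemma block_occurrence_unique s m' : 2 < n -> K < m' ->
  (forall u, u < n * m' -> (c (s + u)).1 = u %/ m' :> nat) -> m' = m /\ s %% N = 0.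
Proof.
move=> n_gt2 Km' occ; have m'_gt0 : 0 < m' by clear -Km'; lia.
have Hm' : 2 * m' < n * m' by rewrite ltn_mul2r m'_gt0.
have m'_lt : m' < n * m' by clear -Hm'; lia.
have [Em Emod] : m' = m /\ (s + m'.-1).+1 %% N = 1 * m.
  apply: long_run_is_subblock => //.
  - by rewrite occ ?divn_small //; clear -m'_gt0 m'_lt; lia.
  - have -> : (s + m'.-1).+1 + m' = s + 2 * m' by clear -m'_gt0; lia.
    by rewrite occ // mulnK.
  - move=> v Hv; have -> : (s + m'.-1).+1 + v = s + (1 * m' + v) by clear -m'_gt0; lia.
    by rewrite occ ?divnMDl ?divn_small //; clear -Hv Hm'; lia.
subst m'; split => //; have HN : m < N by rewrite /N; clear -m'_lt; lia.
have : s + m = 0 + m %[mod N].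
  by rewrite add0n (modn_small HN) -[RHS]mul1n -Emod; congr (_ %% _); clear -m'_gt0; lia.
by move/eqP; rewrite eqn_modDr mod0n => /eqP.
Qed.

End PeriodicBlock.

Lemma eq_modn_shift t o N : o < N -> (t + N - o) %% N = 0 -> t %% N = o.
Proof.
move=> HoN H; have Ho : o <= t + N by rewrite ltnW // ltn_addl.
by rewrite -modnDr -(subnK Ho) -modnDml H add0n modn_small.
Qed.

Lemma construction_step (R : realType) n (lam1 : R) (e : nat -> word n)
    (C : nat -> option (word n * nat)) j w m :
  construction lam1 e C -> C j = Some (w, m) ->
  [/\ 0 < m, ((size w)%:R <= lam1 * (n * m + size w)%:R)%R &
      forall j' w' m', j' < j -> C j' = Some (w', m') -> m != m'].
Proof.
case=> C0 HC Hj; have j_gt0 : 0 < j by case: j Hj => //; rewrite C0.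
have [Hall Hnew] := HC j j_gt0.
have /Hnew [w' [m' [E [_ [m_gt0 [Hdist Hlen]]]]]] : ~ forall u, eq_regular (Rprefix C j) u.
  by move/Hall; rewrite Hj.
move: E; rewrite Hj => -[Ew Em]; subst w' m'; split => // j' w'' m'' Hj' HC'.
by case: (Hdist _ _ _ Hj' HC').
Qed.

Lemma construction_m_inj (R : realType) n (lam1 : R) (e : nat -> word n)
    (C : nat -> option (word n * nat)) j1 j2 w1 w2 m :
  construction lam1 e C -> C j1 = Some (w1, m) -> C j2 = Some (w2, m) -> j1 = j2.
Proof.
move=> HC H1 H2; case: (ltngtP j1 j2) => // Hj.
  by have [_ _ /(_ _ _ _ Hj H1)] := construction_step HC H2; rewrite eqxx.
by have [_ _ /(_ _ _ _ Hj H2)] := construction_step HC H1; rewrite eqxx.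
Qed.

(* The hypothesis on [lam1] is only needed in the weak form [4 n lam1 <= 1]. *)
Lemma small_tail_bound (R : realType) n (lam1 : R) K S :
  0 < n -> (0 < lam1)%R -> (lam1 < 1)%R ->
  ((4 + 2 * n%:R * lam1 / (1 - lam1)) * lam1 <= 1 / n%:R)%R ->
  (K%:R <= lam1 * S%:R)%R -> 4 * n * K <= S.
Proof.
move=> n_gt0 l_gt0 l_lt1 Hlam HK.
have nR : (0 < n%:R :> R)%R by rewrite ltr0n.
have t_ge0 : (0 <= 2 * n%:R * lam1 / (1 - lam1) :> R)%R.
  by apply: divr_ge0; [apply: mulr_ge0; [apply: mulr_ge0|]|]; lra.
have H4 : (4 * n%:R * lam1 <= 1 :> R)%R.
  have : (4 * lam1 <= 1 / n%:R)%R by apply: le_trans Hlam; rewrite ler_wpM2r; lra.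
  by rewrite ler_pdivlMr // mulrAC.
rewrite -(ler_nat R) !natrM.
apply: (le_trans (_ : _ <= 4 * n%:R * (lam1 * S%:R))%R); first by rewrite ler_wpM2l //; lra.
by rewrite mulrA -[X in (_ <= X)%R]mul1r ler_wpM2r.
Qed.

Lemma tail_lt_special_exponent n m K m' : 3 <= n -> 4 * n * K <= n * m + K ->
  n * (n * m + K) < (2 * n - 2) * (n * m') -> K < m'.
Proof.
move=> n_ge3 HK H; have n_gt0 : 0 < n by clear -n_ge3; lia.
have H2 : n * m + K < (2 * n - 2) * m' by rewrite -(ltn_pmul2l n_gt0) mulnCA.
rewrite ltnNge; apply/negP => Hm.
have A : (2 * n - 2) * m' <= (2 * n - 2) * K by rewrite leq_mul2l Hm orbT.
have B : (2 * n - 2) * K <= 4 * n * K by rewrite leq_mul2r; apply/orP; right; lia.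
by clear -H2 HK A B; lia.
Qed.

Lemma relator_block_special n m K : 3 <= n -> 0 < m -> 4 * n * K <= n * m + K ->
  n * (n * m + K) < (2 * n - 2) * (n * m).
Proof. by move=> *; nia. Qed.

Section BlockWords.
Variables (n : nat) (x0 : letter n).

(* The boundary word of a face, read from the start of its block: [b] tells
   whether the face is read along [r] ([b = false]) or along [r^-1]. *)
Definition face_word (b : bool) m (w : word n) : word n :=
  if b then winv (block n m) ++ w else block n m ++ winv w.

Definition block_word (b : bool) m : word n := if b then winv (block n m) else block n m.

Lemma size_face_word b m w : size (face_word b m w) = n * m + size w.
Proof. by case: b; rewrite /face_word size_cat size_winv size_block // addnC. Qed.

Lemma size_block_word b m : size (block_word b m) = n * m.
Proof. by case: b; rewrite /block_word ?size_winv size_block. Qed.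

Lemma nth_face_word b m w y : y < n * m ->
  nth x0 (face_word b m w) y = nth x0 (block_word b m) y.
Proof.
by move=> Hy; case: b; rewrite /face_word /block_word nth_cat ?size_winv size_block Hy.
Qed.

Lemma nth_block_word_sign b m y : y < n * m -> (nth x0 (block_word b m) y).2 = b.
Proof.
move=> Hy; case: b; rewrite /block_word.
  by have [_ ->] := nth_winv_block x0 Hy.
by have [_ ->] := nth_block x0 Hy.
Qed.

Lemma rot_winv_face_word b m w :
  rot (size w) (winv (face_word b m w)) = face_word (~~ b) m w.
Proof.
case: b; rewrite /face_word winv_cat ?winvK /=; last by rewrite rot_size_cat.
by rewrite -(size_winv w) rot_size_cat.
Qed.

Definition orient (b : bool) (y : letter n) : letter n :=
  if b then (rev_ord y.1, ~~ y.2) else y.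

Lemma orient_nth_block_word b m y : y < n * m ->
  (orient b (nth x0 (block_word b m) y)).1 = y %/ m :> nat /\
  (orient b (nth x0 (block_word b m) y)).2 = false.
Proof.
move=> Hy; have m_gt0 : 0 < m by case: m Hy; rewrite ?muln0.
case: b; last exact: nth_block.
have [H1 H2] := nth_winv_block x0 Hy.
rewrite /orient /= H1 H2; split => //.
have : y %/ m < n by rewrite ltn_divLR.
by set q := y %/ m; clear; lia.
Qed.

Lemma orient_sign b y : (orient b y).2 = (y.2 != b).
Proof. by case: b; case: y => ? []. Qed.

Lemma nth_block_word_index b m y : y < n * m ->
  (nth x0 (block_word b m) y).1 = (if b then (n * m - y.+1) %/ m else y %/ m) :> nat.
Proof.
move=> Hy; case: b; last by have [-> _] := nth_block x0 Hy.
by have [-> _] := nth_winv_block x0 Hy; rewrite divn_rev.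
Qed.

Lemma opposite_block_words b1 b2 m1 m2 a1 a2 l :
  0 < m1 -> 0 < m2 -> 2 * m1 < l -> a1 + l <= n * m1 -> a2 + l <= n * m2 ->
  (forall v, v < l -> nth x0 (block_word b2 m2) (a2 + v) =
                      linv (nth x0 (block_word b1 m1) (a1 + (l - v.+1)))) ->
  [/\ b2 = ~~ b1, m1 = m2 & a1 + a2 + l = n * m1].
Proof.
move=> m1_gt0 m2_gt0 Hl Ha1 Ha2 Hrel.
have l_gt0 : 0 < l by clear -Hl; lia.
have Eb : b2 = ~~ b1.
  have Hlast : l.-1 < l by clear -l_gt0; lia.
  move: (Hrel _ Hlast) => /(congr1 snd) /=.
  rewrite !nth_block_word_sign //; clear -l_gt0 Ha1 Ha2; lia.
have idx v : v < l -> ((if b2 then (n * m2 - (a2 + v).+1) %/ m2 else (a2 + v) %/ m2) =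
    (if b1 then (n * m1 - (a1 + (l - v.+1)).+1) %/ m1 else (a1 + (l - v.+1)) %/ m1)).
  move=> Hv; move: (Hrel _ Hv) => /(congr1 (fun y => nat_of_ord y.1)) /=.
  by rewrite !nth_block_word_index //; clear -Hv Ha1 Ha2; lia.
subst b2; clear Hrel; case: b1 idx => /= idx.
- have [Em Ea] : m1 = m2 /\ n * m1 - a1 - l = a2.
    apply: (divn_window_inj (l := l)) => // v Hv; rewrite idx //.
    by congr (_ %/ _); clear -Hv Ha1; lia.
  by subst; split => //; clear -Ha1; lia.
- have [Em Ea] : m1 = m2 /\ a1 = n * m2 - a2 - l.
    apply: (divn_window_inj (l := l)) => // u Hu.
    rewrite (_ : u = l - (l - u.+1).+1) -?idx; try by clear -Hu; lia.
    by congr (_ %/ _); clear -Hu Ha2; lia.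
  by subst; split => //; clear -Ha2; lia.
Qed.

Lemma nth_face_word_mirror b m w a1 a2 l j :
  a1 + a2 + l = n * m -> 0 < l -> j <= n * m + size w ->
  linv (nth x0 (face_word (~~ b) m w) ((a2 + l.-1 + (n * m + size w - j)) %% (n * m + size w))) =
  nth x0 (face_word b m w) ((a1 + j) %% (n * m + size w)).
Proof.
move=> Ea l_gt0 Hj; rewrite -rot_winv_face_word -(size_face_word b m w).
by rewrite (@nth_rot_winv _ x0 _ (size w) _ (a1 + j)) ?linvK // size_face_word ?leq_addl //;
  clear -Ea l_gt0 Hj; lia.
Qed.

End BlockWords.

Arguments block_word {n}.

Section Diagram.
Variables (n : nat) (M : dmap n) (x0 : letter n).
Hypothesis dnext_inj : injective (dnext M).

Definition lab_at (x : dart M) u := dlab M (iter u (dnext M) x).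

Lemma lab_at_iter x t u : lab_at (iter t (dnext M) x) u = lab_at x (t + u).
Proof. by rewrite /lab_at -iterD addnC. Qed.

Lemma blen_iter x t : blen M (iter t (dnext M) x) = blen M x.
Proof.
elim: t => //= t IH; rewrite /blen in IH *.
by rewrite (order_id_cycle (cycle_orbit dnext_inj _)) IH.
Qed.

Lemma blen_gt0 x : 0 < blen M x.
Proof. exact: order_gt0. Qed.

Lemma iter_modn_blen x u : iter u (dnext M) x = iter (u %% blen M x) (dnext M) x.
Proof.
rewrite {1}(divn_eq u (blen M x)); elim: (u %/ blen M x) => [|q IH]; first by rewrite mul0n.
by rewrite mulSn -addnA addnC iterD iter_order.
Qed.

Lemma lab_at_mod x u : lab_at x u = lab_at x (u %% blen M x).
Proof. by rewrite /lab_at -iter_modn_blen. Qed.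

Lemma fconnect_iterP x y : fconnect (dnext M) x y ->
  exists2 t, t < blen M x & y = iter t (dnext M) x.
Proof. by move=> H; exists (findex (dnext M) x y); rewrite ?findex_max ?iter_findex. Qed.

Lemma blen_fconnect x y : fconnect (dnext M) x y -> blen M y = blen M x.
Proof. by case/fconnect_iterP => t _ ->; rewrite blen_iter. Qed.

Lemma nth_lab_traject x k u : u < k ->
  nth x0 (map (dlab M) (traject (dnext M) x k)) u = lab_at x u.
Proof. by move=> Hu; rewrite (nth_map x) ?size_traject // nth_traject. Qed.

Lemma size_bword x : size (bword M x) = blen M x.
Proof. by rewrite size_map size_traject. Qed.

Lemma rot_bword_lab x j r : rot j (bword M x) = r ->
  exists2 o, o < blen M x & forall u, lab_at x (o + u) = nth x0 r (u %% blen M x).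
Proof.
move=> Hr; set N := blen M x; have N_gt0 : 0 < N := blen_gt0 x.
have [j' Hj' Hrj] : exists2 j', j' < N & rot j' (bword M x) = r.
  case: (ltnP j N) => H; first by exists j.
  by exists 0; rewrite ?rot0 -?Hr ?rot_oversize ?size_bword.
exists j' => // u; have Hu : u %% N < N by rewrite ltn_pmod.
have Hj'' : j' <= size (bword M x) by rewrite size_bword ltnW.
rewrite -Hrj nth_rot_mod // size_bword -/N //.
rewrite /bword nth_lab_traject ?ltn_pmod // lab_at_mod [in RHS]lab_at_mod -/N.
by rewrite modn_mod modnDml addnC.
Qed.

Variable C : nat -> option (word n * nat).
Hypothesis face_relator : forall d, dface M d ->
  exists r j, (Rall C r \/ Rall C (winv r)) /\ rot j (bword M d) = r.
Hypothesis n_ge3 : 3 <= n.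
Hypothesis relator_shape : forall j w m, C j = Some (w, m) ->
  0 < m /\ 4 * n * size w <= n * m + size w.

Lemma face_label x : dface M x -> exists j w m b o,
  [/\ C j = Some (w, m), o < blen M x, blen M x = n * m + size w &
      forall u, lab_at x (o + u) = nth x0 (face_word b m w) (u %% blen M x)].
Proof.
move=> Hx; have [r [j0 [HR Hrot]]] := face_relator Hx.
have [o Ho Hl] := rot_bword_lab Hrot.
have Hs : size r = blen M x by rewrite -Hrot size_rot size_bword.
set N := blen M x in Ho Hl Hs *.
case: HR => [[j [w [m [HC Er]]]] | [j [w [m [HC Er]]]]].
  exists j, w, m, false, o; split => //; last by move=> u; rewrite Hl Er.
  by rewrite -Hs Er size_cat size_block size_winv.
have Er' : r = w ++ winv (block n m) by rewrite -[r]winvK Er /relator winv_cat winvK.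
have N_gt0 : 0 < N := blen_gt0 x.
exists j, w, m, true, ((o + size w) %% N); split => //; first by rewrite ltn_pmod.
  by rewrite -Hs Er' size_cat size_winv size_block addnC.
move=> u; have -> : face_word true m w = rot (size w) r by rewrite Er' rot_size_cat.
have HK : size w <= N by rewrite -Hs Er' size_cat leq_addr.
rewrite nth_rot_mod ?Hs ?ltn_pmod // -Hl lab_at_mod [in RHS]lab_at_mod -/N.
by rewrite modnDml [in RHS]addnCA [in RHS]modnDml [in RHS]addnC.
Qed.

Lemma special_block_unique x w m b o t k m' b' :
  0 < m -> 4 * n * size w <= n * m + size w ->
  blen M x = n * m + size w -> o < blen M x ->
  (forall u, lab_at x (o + u) = nth x0 (face_word b m w) (u %% blen M x)) ->
  n * blen M x < (2 * n - 2) * k ->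
  map (dlab M) (traject (dnext M) (iter t (dnext M) x) k) = block_word b' m' ->
  [/\ b' = b, m' = m, k = n * m & t %% blen M x = o].
Proof.
move=> m_gt0 HK HN Ho Hl Hk Hocc; set N := blen M x in HN Ho Hl Hk *.
(* After [orient b] the face reads periodically from the positive block: an
   oppositely oriented block is then a long negative run, an equally oriented
   one must be the relator's own block. *)
have Ek : k = n * m' by rewrite -(size_block_word n b' m') -Hocc size_map size_traject.
rewrite Ek in Hk Hocc.
have Km' : size w < m' by apply: (tail_lt_special_exponent n_ge3 HK); rewrite -HN.
have occ u : u < n * m' -> lab_at x (t + u) = nth x0 (block_word b' m') u.
  by move=> Hu; rewrite -lab_at_iter -(nth_lab_traject _ Hu) Hocc.
pose c u := orient b (lab_at x (o + u)).
have c_periodic u : c (u + (n * m + size w)) = c u.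
  by rewrite /c -HN lab_at_mod [in RHS]lab_at_mod -/N addnA modnDr.
have c_block u : u < n * m -> (c u).1 = u %/ m :> nat /\ (c u).2 = false.
  move=> Hu; have HuN : u < N by rewrite HN ltn_addr.
  by rewrite /c Hl modn_small // nth_face_word //; apply: orient_nth_block_word.
have c_shift u : c (t + N - o + u) = orient b (lab_at x (t + u)).
  rewrite /c lab_at_mod [in RHS]lab_at_mod -/N.
  have -> : o + (t + N - o + u) = t + u + N by clear -Ho; lia.
  by rewrite modnDr.
have n_gt0 : 0 < n by clear -n_ge3; lia.
have m'_le u : u < m' -> u < n * m' by move=> Hu; rewrite (leq_trans Hu) ?leq_pmull.
case: (eqVneq b' b) => [Eb | Nb].
- subst b'.
  have occ' u : u < n * m' -> (c (t + N - o + u)).1 = u %/ m' :> nat.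
    by move=> Hu; rewrite c_shift occ //; case: (orient_nth_block_word x0 b Hu).
  have [Em Es] := block_occurrence_unique m_gt0 n_gt0 c_periodic c_block n_ge3 Km' occ'.
  by subst m'; split => //; apply: eq_modn_shift Ho _; rewrite -HN in Es.
- exfalso; apply: (no_long_negative_run (t := t + N - o) m_gt0 n_gt0 c_periodic c_block Km').
  move=> v Hv.
  by rewrite c_shift occ ?m'_le // orient_sign nth_block_word_sign ?m'_le.
Qed.

Hypothesis dface_next : forall d, dface M (dnext M d) = dface M d.

Lemma dface_iter x t : dface M (iter t (dnext M) x) = dface M x.
Proof. by elim: t => //= t IH; rewrite dface_next. Qed.

Lemma special_block_selected x k : dface M x -> special_block M x k -> 0 < k ->
  selected M (traject (dnext M) x k).
Proof. by move=> Hx Hsb Hk; exists x, k, 0, k. Qed.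

Lemma bsub_traject d x l : fconnect (dnext M) d x -> 0 < l <= blen M d ->
  bsub M d (traject (dnext M) x l).
Proof. by move=> Hdx Hl; exists x, l. Qed.

Lemma bsub_head d x l : bsub M d (traject (dnext M) x l) -> 0 < l -> fconnect (dnext M) d x.
Proof.
case=> [e [l' [He [Hl' Ep]]]] Hl; suff -> : x = e by [].
by move: Ep; case: l Hl => // l _; case: l' Hl' => // l' _; rewrite !trajectS => -[].
Qed.

Lemma lab_at_block x b m w u : blen M x = n * m + size w ->
  (forall u, lab_at x u = nth x0 (face_word b m w) (u %% blen M x)) ->
  u < n * m -> lab_at x u = nth x0 (block_word b m) u.
Proof. by move=> HN Hx Hu; rewrite Hx modn_small ?nth_face_word // HN ltn_addr. Qed.

Lemma block_at_face_start x b m w : blen M x = n * m + size w ->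
  (forall u, lab_at x u = nth x0 (face_word b m w) (u %% blen M x)) ->
  map (dlab M) (traject (dnext M) x (n * m)) = block_word b m.
Proof.
move=> HN Hx; apply: (@eq_from_nth _ x0); first by rewrite size_map size_traject size_block_word.
move=> u; rewrite size_map size_traject => Hu.
by rewrite nth_lab_traject // (lab_at_block HN Hx).
Qed.

Lemma special_block_word x k : special_block M x k -> exists b m',
  n * blen M x < (2 * n - 2) * k /\ map (dlab M) (traject (dnext M) x k) = block_word b m'.
Proof. by case=> _ [H [m' [E|E]]]; [exists false | exists true]; exists m'. Qed.

Lemma special_block_relator x k : dface M x -> special_block M x k -> exists j w m b,
  [/\ C j = Some (w, m), k = n * m, blen M x = n * m + size w,
      map (dlab M) (traject (dnext M) x k) = block_word b m &
      forall u, lab_at x u = nth x0 (face_word b m w) (u %% blen M x)].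
Proof.
move=> Hx /special_block_word [b [m' [Hk Hl]]].
have [j [w [m [b0 [o [HC Ho HN Hlo]]]]]] := face_label Hx.
have [m_gt0 HK] := relator_shape HC.
have [Eb Em Ek] := special_block_unique (t := 0) m_gt0 HK HN Ho Hlo Hk Hl.
by rewrite mod0n => Eo; subst b0 m' o; exists j, w, m, b.
Qed.

Lemma face_block d : dface M d -> exists j w m, [/\ C j = Some (w, m),
  blen M d = n * m + size w & exists p, [/\ selected M p, bsub M d p & size p = n * m]].
Proof.
move=> Hd; have [j [w [m [b [o [HC Ho HN Hlo]]]]]] := face_label Hd.
have [m_gt0 HK] := relator_shape HC.
have nm_gt0 : 0 < n * m by rewrite muln_gt0 m_gt0 andbT (leq_trans _ n_ge3).
set x := iter o (dnext M) d.
have HNx : blen M x = n * m + size w by rewrite blen_iter.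
have Hword : map (dlab M) (traject (dnext M) x (n * m)) = block_word b m.
  by apply: block_at_face_start HNx _ => u; rewrite lab_at_iter Hlo blen_iter.
exists j, w, m; split => //; exists (traject (dnext M) x (n * m)); split.
- apply: special_block_selected => //; first by rewrite dface_iter.
  rewrite /special_block HNx leq_addr relator_block_special //; split => //; split => //.
  by exists m; move: Hword; case: (b) => ->; [right | left].
- by apply: bsub_traject; [exact: fconnect_iter | rewrite nm_gt0 HN leq_addr].
- by rewrite size_traject.
Qed.

Lemma max_selected_special d p : max_selected M d p -> exists t k,
  [/\ dface M (iter t (dnext M) d), special_block M (iter t (dnext M) d) k &
      p = traject (dnext M) (iter t (dnext M) d) k].
Proof.
case=> [[d1 [k1 [a [l [Hd1 [Hsb [Hl [Hal Ep]]]]]]]] [Hbs Hmax]].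
have Hdd1 : fconnect (dnext M) d d1.
  rewrite Ep in Hbs; apply: connect_trans (bsub_head Hbs Hl) _.
  by rewrite (fconnect_sym dnext_inj); apply: fconnect_iter.
have [t _ Et] := fconnect_iterP Hdd1.
have k1_gt0 : 0 < k1 by clear -Hl Hal; lia.
exists t, k1; rewrite -Et; split => //; apply: Hmax.
- exact: special_block_selected.
- by apply: (bsub_traject Hdd1); rewrite k1_gt0 -(blen_fconnect Hdd1); case: Hsb.
- rewrite Ep -(subnKC Hal) -addnA !trajectD; exact: infix_infix.
Qed.

Lemma max_selected_unique d p q : max_selected M d p -> max_selected M d q -> p = q.
Proof.
move=> /max_selected_special [t1 [k1 [Hf1 Hs1 ->]]] /max_selected_special [t2 [k2 [_ Hs2 ->]]].
have Hd : dface M d by rewrite -(dface_iter d t1).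
have [j [w [m [b [o [HC Ho HN Hlo]]]]]] := face_label Hd.
have [m_gt0 HK] := relator_shape HC.
have [b1 [m1 [Hk1 Hl1]]] := special_block_word Hs1.
have [b2 [m2 [Hk2 Hl2]]] := special_block_word Hs2.
rewrite !blen_iter in Hk1 Hk2.
have [_ _ -> Et1] := special_block_unique m_gt0 HK HN Ho Hlo Hk1 Hl1.
have [_ _ -> Et2] := special_block_unique m_gt0 HK HN Ho Hlo Hk2 Hl2.
by rewrite (iter_modn_blen d t1) (iter_modn_blen d t2) Et1 Et2.
Qed.

Lemma face_orientation_unique x y b b' m w :
  0 < m -> 4 * n * size w <= n * m + size w -> blen M x = n * m + size w ->
  (forall u, lab_at x u = nth x0 (face_word b m w) (u %% blen M x)) ->
  (forall u, lab_at y u = nth x0 (face_word b' m w) (u %% blen M y)) ->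
  fconnect (dnext M) x y -> b' = b.
Proof.
move=> m_gt0 HK HN Hx Hy /fconnect_iterP [t _ Et]; subst y.
have HNy : blen M (iter t (dnext M) x) = n * m + size w by rewrite blen_iter.
have Hblk := block_at_face_start HNy Hy.
have Hk := relator_block_special n_ge3 m_gt0 HK; rewrite -HN in Hk.
by case: (special_block_unique (o := 0) m_gt0 HK HN (blen_gt0 x) Hx Hk Hblk).
Qed.

Hypothesis drev_inv : involutive (drev M).
Hypothesis dlab_drev : forall d, dlab M (drev M d) = linv (dlab M d).

Lemma pinvK : involutive (pinv M).
Proof.
by move=> p; rewrite /pinv map_rev revK -map_comp map_id_in // => x _; apply: drev_inv.
Qed.

Lemma pinv_traject x y l : pinv M (traject (dnext M) x l) = traject (dnext M) y l ->
  forall v, v < l -> iter v (dnext M) y = drev M (iter (l - v.+1) (dnext M) x).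
Proof.
move=> E v Hv; rewrite -(nth_traject _ Hv) -E /pinv nth_rev size_map size_traject //.
by rewrite (nth_map x) ?size_traject ?nth_traject //; clear -Hv; lia.
Qed.

Lemma iter_conj_finv x j : iter j (fun y => drev M (finv (dnext M) (drev M y))) x =
  drev M (iter j (finv (dnext M)) (drev M x)).
Proof. by elim: j => /= [|j ->]; rewrite drev_inv. Qed.

Lemma mirrored_faces_not_reduced d1 d2 w m b a1 a2 l :
  0 < m -> 4 * n * size w <= n * m + size w -> dface M d1 -> dface M d2 ->
  blen M d1 = n * m + size w -> blen M d2 = n * m + size w ->
  (forall u, lab_at d1 u = nth x0 (face_word b m w) (u %% blen M d1)) ->
  (forall u, lab_at d2 u = nth x0 (face_word (~~ b) m w) (u %% blen M d2)) ->
  a1 + a2 + l = n * m -> 0 < l ->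
  drev M (iter a1 (dnext M) d1) = iter (a2 + l.-1) (dnext M) d2 ->
  ~ weakly_reduced M.
Proof.
move=> m_gt0 HK Hd1 Hd2 HN1 HN2 Hlo1 Hlo2 Ea l_gt0 Hd0r; apply.
set d0 := iter a1 (dnext M) d1; set N := n * m + size w in HN1 HN2.
have Hb0 : blen M d0 = N by rewrite blen_iter.
have Hbr : fingraph.order (dnext M) (drev M d0) = N by rewrite Hd0r -/(blen _ _) blen_iter.
exists d0; split.
- by rewrite dface_iter.
- by rewrite Hd0r dface_iter.
- apply/negP => /(connect_trans (fconnect_iter _ a1 d1)); rewrite Hd0r => Hc.
  have /(connect_trans Hc) : fconnect (dnext M) (iter (a2 + l.-1) (dnext M) d2) d2.
    by rewrite (fconnect_sym dnext_inj) fconnect_iter.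
  move/(face_orientation_unique m_gt0 HK HN1 Hlo1 Hlo2).
  by case: (b).
- by rewrite Hb0 -Hbr.
move=> j; rewrite Hb0 => Hj.
have Hj' : j <= fingraph.order (dnext M) (drev M d0) by rewrite Hbr ltnW.
rewrite iter_conj_finv dlab_drev (iter_finv dnext_inj Hj') Hbr Hd0r.
rewrite -/(lab_at _ _) lab_at_iter Hlo1 -/(lab_at _ _) !lab_at_iter Hlo2 HN1 HN2.
by rewrite (nth_face_word_mirror x0 b Ea l_gt0) //; apply: ltnW.
Qed.

Hypothesis C_inj :
  forall j1 j2 w1 w2 m, C j1 = Some (w1, m) -> C j2 = Some (w2, m) -> j1 = j2.
Hypothesis reduced : weakly_reduced M.

Lemma double_selected_short d p : selected M p -> selected M (pinv M p) -> bsub M d p ->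
  n * size p <= 2 * blen M d.
Proof.
move=> [d1 [k1 [a1 [l [Hd1 [Hsb1 [Hl [Hal1 Ep]]]]]]]].
move=> [d2 [k2 [a2 [l2 [Hd2 [Hsb2 [_ [Hal2 Ep2]]]]]]]] Hbs.
have El : l2 = l by have := congr1 size Ep2; rewrite /pinv size_rev size_map Ep !size_traject.
subst l2; rewrite Ep in Ep2 Hbs.
have [j1 [w1 [m1 [b1 [HC1 Ek1 HN1 _ Hlo1]]]]] := special_block_relator Hd1 Hsb1.
have [j2 [w2 [m2 [b2 [HC2 Ek2 HN2 _ Hlo2]]]]] := special_block_relator Hd2 Hsb2.
have [[m1_gt0 HK1] [m2_gt0 _]] := (relator_shape HC1, relator_shape HC2).
subst k1 k2; rewrite -(blen_fconnect (bsub_head Hbs Hl)) blen_iter HN1 Ep size_traject.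
case: (leqP l (2 * m1)) => Hl2m.
  by rewrite mulnDr (leq_trans _ (leq_addr _ _)) // mulnCA leq_mul2l Hl2m orbT.
exfalso; have Hrel := pinv_traject Ep2.
have Hwords v : v < l -> nth x0 (block_word b2 m2) (a2 + v) =
                         linv (nth x0 (block_word b1 m1) (a1 + (l - v.+1))).
  move=> Hv; rewrite -(lab_at_block HN2 Hlo2) -?(lab_at_block HN1 Hlo1);
    try by clear -Hv Hal1 Hal2; lia.
  by rewrite -!lab_at_iter {1}/lab_at Hrel // dlab_drev.
have [Eb Em Ea] := opposite_block_words m1_gt0 m2_gt0 Hl2m Hal1 Hal2 Hwords.
subst b2 m2; have Ej := C_inj HC1 HC2; subst j2.
move: HC2; rewrite HC1 => -[Ew]; subst w2.
apply: (mirrored_faces_not_reduced m1_gt0 HK1 Hd1 Hd2 HN1 HN2 Hlo1 Hlo2 Ea) => //.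
have Hlast : l.-1 < l by clear -Hl; lia.
by rewrite addnC iterD Hrel // (_ : l - l.-1.+1 = 0) //; clear -Hl; lia.
Qed.

End Diagram.

Lemma size_pinv n (M : dmap n) p : size (pinv M p) = size p.
Proof. by rewrite size_rev size_map. Qed.

Lemma le_two_div_natr (R : realType) n s B : 0 < n -> n * s <= 2 * B ->
  (s%:R <= 2 / n%:R * B%:R :> R)%R.
Proof.
move=> n_gt0 H; rewrite mulrAC ler_pdivlMr ?ltr0n // -natrM.
by rewrite -[(2 * B%:R)%R](natrM R 2 B) ler_nat mulnC.
Qed.

Local Open Scope ring_scope.

Theorem proposition5p1 (R : realType) (n : nat) (lam1 : R)
    (e : nat -> word n) (C : nat -> option (word n * nat)) :
  (63 <= n)%N ->
  0 < lam1 -> lam1 < 1 ->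
  (4 + 2 * n%:R * lam1 / (1 - lam1)) * lam1 <= 1 / n%:R ->
  word_order_enum e ->
  construction lam1 e C ->
  forall M : dmap n, is_diagram (Rall C) M -> weakly_reduced M ->
    condB M lam1 (2 / n%:R).
Proof.
move=> n_ge63 l_gt0 l_lt1 Hlam _ Hcons M.
move=> [[drev_inv [_ [dnext_inj [dface_next _]]]] [dlab_drev face_rel]] reduced.
have n_ge3 : (3 <= n)%N by apply: leq_trans n_ge63.
have n_gt0 : (0 < n)%N by apply: leq_trans n_ge63.
have shape j w m : C j = Some (w, m) -> (0 < m /\ 4 * n * size w <= n * m + size w)%N.
  by case/(construction_step Hcons) => m_gt0 Hl _; split; last exact: small_tail_bound Hl.
have C_inj := construction_m_inj Hcons.
pose x0 : letter n := (Ordinal n_gt0, false).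
move=> d Hd; have [j [w [m [HC HN [p [Hp Hbp Hsp]]]]]] :=
  face_block x0 dnext_inj face_rel n_ge3 shape dface_next Hd.
split; [split | split].
- by exists p.
- exact: (@max_selected_unique _ _ x0 dnext_inj _ face_rel n_ge3 shape dface_next d).
- exists p; do !split => //; have [_ Hl _] := construction_step Hcons HC.
  by rewrite HN Hsp natrD mulrBl mul1r in Hl *; lra.
- have short := double_selected_short x0 dnext_inj face_rel n_ge3 shape dface_next
    drev_inv dlab_drev C_inj reduced.
  move=> q _ Hq Hqi [Hb | Hb]; apply: le_two_div_natr => //; first exact: short.
  by rewrite -(size_pinv q) short // pinvK.
Qed.
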